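(* Let $(F, v, \Gamma)$ be a Henselian valued field such that $T = \mathrm{Th}(F; +, \cdot, |)$ is dp-small. Then the value group $\Gamma$ is divisible.
   Context: Here $v: F^\times\to\Gamma$ is the valuation and $a\mid b$ holds iff $v(a)\le v(b)$. For a complete theory $T$ in language $L$ with monster model $\mathcal{U}$ ($\mathcal{U}_y$ the $|y|$-tuples from $\mathcal{U}$): a partial type $\pi(x)$ is dp-small if there do not exist $L(\mathcal{U})$-formulas $\varphi_i(x)$ ($i<\omega$), an $L$-formula $\psi(x;y)$ and $b_j\in\mathcal{U}_y$ ($j<\omega$) such that for all $i_0,j_0<\omega$ the type $\pi(x)\cup\{\varphi_{i_0}(x),\psi(x;b_{j_0})\}\cup\{\neg\varphi_i(x): i\ne i_0\}\cup\{\neg\psi(x;b_j): j\neq j_0\}$ is consistent. $T$ is dp-small if $x=x$ is dp-small for $x$ a single variable. *)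

From HB Require Import structures.
From mathcomp Require Import all_boot all_order all_algebra.
Set Implicit Arguments. Unset Strict Implicit. Unset Printing Implicit Defensive.
Import Order.TTheory GRing.Theory Num.Theory.
Local Open Scope ring_scope.

(* Valued fields, given by their valuation ring O.                     *)
(* Value group Gamma = F^x / O^x, v(a) <= v(b) iff b \in a * O.       *)

Definition is_valuation_ring (F : fieldType) (O : {pred F}) : Prop :=
  [/\ 1 \in O,
      (forall x y, x \in O -> y \in O -> x - y \in O),
      (forall x y, x \in O -> y \in O -> x * y \in O) &
      (forall x : F, x != 0 -> x \in O \/ x^-1 \in O)].

Definition vunit (F : fieldType) (O : {pred F}) (x : F) : Prop :=
  [/\ x != 0, x \in O & x^-1 \in O].

Definition vmax (F : fieldType) (O : {pred F}) (x : F) : Prop :=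
  x \in O /\ ~ vunit O x.

(* the divisibility relation a | b  iff  v(a) <= v(b) (with v(0) = oo) *)
Definition vdiv (F : fieldType) (O : {pred F}) (a b : F) : Prop :=
  exists2 c, c \in O & b = a * c.

Definition henselian (F : fieldType) (O : {pred F}) : Prop :=
  forall p : {poly F}, p \is monic -> (forall i, p`_i \in O) ->
  forall a, a \in O -> vmax O p.[a] -> vunit O (p^`()).[a] ->
  exists b, [/\ b \in O, p.[b] = 0 & vmax O (b - a)].

Definition value_group_divisible (F : fieldType) (O : {pred F}) : Prop :=
  forall a : F, a != 0 -> forall n : nat, (0 < n)%N ->
  exists b : F, b != 0 /\ vunit O (a / b ^+ n).

(* Variables are de Bruijn indices; FEx binds index 0.                 *)

Inductive term : Type :=
| TVar of nat
| TAdd of term & term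
| TMul of term & term.

Inductive formula : Type :=
| FEq of term & term
| FDiv of term & term
| FNot of formula
| FAnd of formula & formula
| FEx of formula.

Record structure : Type := Structure {
  carrier :> Type;
  s_add : carrier -> carrier -> carrier;
  s_mul : carrier -> carrier -> carrier;
  s_div : carrier -> carrier -> Prop }.

Definition scons (M : Type) (x : M) (e : nat -> M) : nat -> M :=
  fun n => match n with O => x | S k => e k end.

Fixpoint eval_term (M : structure) (e : nat -> M) (t : term) : M :=
  match t with
  | TVar n => e n
  | TAdd t u => s_add (eval_term e t) (eval_term e u)
  | TMul t u => s_mul (eval_term e t) (eval_term e u)
  end.

Fixpoint sat (M : structure) (e : nat -> M) (f : formula) : Prop :=
  match f with
  | FEq t u => eval_term e t = eval_term e u
  | FDiv t u => s_div (eval_term e t) (eval_term e u)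
  | FNot g => ~ sat e g
  | FAnd g h => sat e g /\ sat e h
  | FEx g => exists x : M, sat (scons x e) g
  end.

(* M and N have the same complete theory: they agree on the universal
   closure of every formula (hence on every sentence). *)
Definition elem_equiv (M N : structure) : Prop :=
  forall f : formula, (forall e : nat -> M, sat e f) <-> (forall e : nat -> N, sat e f).

(* The monster model is replaced by an arbitrary model M of Th(S);
   "consistent" (with the elementary diagram of M) = finitely satisfiable in M.
   phi_i(x) is the L(M)-formula (phi i) with parameters c i;
   psi(x; b_j) is the L-formula psi with x := index 0, parameters b j. *)
Definition dp_small (S : structure) : Prop :=
  forall M : structure, elem_equiv M S ->
  ~ exists (phi : nat -> formula) (c : nat -> nat -> M)
           (psi : formula) (b : nat -> nat -> M),
      forall i0 j0 N : nat, exists x : M,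
        [/\ sat (scons x (c i0)) (phi i0),
            sat (scons x (b j0)) psi,
            (forall i, (i < N)%N -> i <> i0 -> ~ sat (scons x (c i)) (phi i)) &
            (forall j, (j < N)%N -> j <> j0 -> ~ sat (scons x (b j)) psi)].

Definition vf_structure (F : fieldType) (O : {pred F}) : structure :=
  @Structure F (fun x y => x + y) (fun x y => x * y) (vdiv O).

From mathcomp Require Import all_boot all_order all_algebra.
From mathcomp Require Import boolp classical_sets filter.
From mathcomp Require Import ring.
Set Implicit Arguments. Unset Strict Implicit. Unset Printing Implicit Defensive.
Import Order.TTheory GRing.Theory Num.Theory.

(* Suppose v(a) is not divisible by q > 1 in the value group, with v(a) > 0.  Then the
   sets "v(x) lies in q^i Gamma but not in q^(i+1) Gamma" (i < omega) are pairwise disjoint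
   and definable without parameters, while for each fixed k the valuation intervals
   [j q^k v(a), (j+1) q^k v(a)) (j < omega) are uniformly definable and pairwise disjoint.
   The element a^(j q^k + q^i) lies in the i-th set and the j-th interval as soon as k > i;
   passing to an ultrapower along a nonprincipal ultrafilter on k turns these eventual
   patterns into one array witnessing that Th(F) is not dp-small. *)

Lemma eval_term_ext (M : structure) (e e' : nat -> M) (t : term) :
  e =1 e' -> eval_term e t = eval_term e' t.
Proof. by move=> ee'; elim: t => [n|t IHt s IHs|t IHt s IHs] //=; rewrite IHt IHs. Qed.

Lemma sat_ext (M : structure) (f : formula) (e e' : nat -> M) :
  e =1 e' -> sat e f <-> sat e' f.
Proof.
elim: f e e' => [t s|t s|g IH|g IHg h IHh|g IH] e e' ee' /=.
- by rewrite (eval_term_ext t ee') (eval_term_ext s ee').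
- by rewrite (eval_term_ext t ee') (eval_term_ext s ee').
- by rewrite (IH _ _ ee').
- by rewrite (IHg _ _ ee') (IHh _ _ ee').
- have ee'x (x : M) : scons x e =1 scons x e' by case.
  by split=> -[x]; exists x; apply/(IH _ _ (ee'x x)).
Qed.

Lemma scons_coord (T : Type) (xs : nat -> T) (E : nat -> nat -> T) (k : nat) :
  (scons xs E)^~ k =1 scons (xs k) (E^~ k).
Proof. by case. Qed.

Lemma exists_nonprincipal_ultrafilter :
  exists U : set_system nat, UltraFilter U /\ forall K, U (fun k => (K <= k)%N).
Proof.
have [U [U_ultra eventually_U]] := ultraFilterLemma eventually_filter.
by exists U; split=> // K; apply: eventually_U; exists K.
Qed.

Section Ultrapower.

Variables (S : structure) (U : set_system nat).
Context {U_ultra : UltraFilter U}.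

Lemma ultra_const (P : Prop) : U (fun _ => P) -> P.
Proof.
move=> UP; apply: contrapT => nP; apply: (filter_not_empty U).
by apply: filterS UP => k.
Qed.

Lemma ultra_not (A : set nat) : ~ U A <-> U (fun k => ~ A k).
Proof.
split; first by case: (in_ultra_setVsetC A U_ultra).
move=> UnA UA; apply: (filter_not_empty U).
by apply: filterS (filterI UA UnA) => k [].
Qed.

Lemma ultra_congr2 (A B C : Type) (h : A -> B -> C) f f' g g' :
  U (fun k => f k = f' k) -> U (fun k => g k = g' k) ->
  U (fun k => h (f k) (g k) = h (f' k) (g' k)).
Proof. by move=> ff' gg'; apply: filterS (filterI ff' gg') => k [-> ->]. Qed.

Definition ultra_eq (f g : nat -> S) : Prop := U (fun k => f k = g k).

Lemma ultra_eq_refl f : ultra_eq f f.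
Proof. exact: filterS filterT. Qed.

Lemma ultra_eq_sym f g : ultra_eq f g -> ultra_eq g f.
Proof. exact: filterS. Qed.

Lemma ultra_eq_trans f g h : ultra_eq f g -> ultra_eq g h -> ultra_eq f h.
Proof. by move=> fg gh; apply: filterS (filterI fg gh) => k [-> ->]. Qed.

(* S carries no choice structure, so the quotient is built as the type of ultra_eq-classes. *)
Definition ultrapower : Type := {P : set (nat -> S) | exists f, P = ultra_eq f}.

Definition ultra_class (f : nat -> S) : ultrapower := exist _ (ultra_eq f) (ex_intro _ f erefl).

Definition ultra_rep (X : ultrapower) : nat -> S := proj1_sig (cid (proj2_sig X)).

Lemma ultra_classK X : ultra_class (ultra_rep X) = X.
Proof.
case: X => P P_class; rewrite /ultra_rep /=; case: (cid P_class) => f /= fP.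
exact: eq_exist.
Qed.

Lemma ultra_class_eqP f g : ultra_class f = ultra_class g <-> ultra_eq f g.
Proof.
split=> [/(congr1 (@proj1_sig _ _)) /= ->|fg]; first exact: ultra_eq_refl.
apply: eq_exist; apply/funext => h; apply/propext.
by split; apply: ultra_eq_trans; [exact: ultra_eq_sym|].
Qed.

Lemma ultra_repK f : ultra_eq (ultra_rep (ultra_class f)) f.
Proof. by apply/ultra_class_eqP; rewrite ultra_classK. Qed.

Definition ultrapower_structure : structure :=
  @Structure ultrapower
    (fun X Y => ultra_class (fun k => s_add (ultra_rep X k) (ultra_rep Y k)))
    (fun X Y => ultra_class (fun k => s_mul (ultra_rep X k) (ultra_rep Y k)))
    (fun X Y => U (fun k => s_div (ultra_rep X k) (ultra_rep Y k))).

Local Notation class_env E := (fun n => ultra_class (E n) : ultrapower_structure).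

Lemma los_term (E : nat -> nat -> S) (t : term) :
  eval_term (class_env E) t = ultra_class (fun k => eval_term (E^~ k) t).
Proof.
elim: t => [n|t IHt s IHs|t IHt s IHs] //=; rewrite IHt IHs;
  by apply/ultra_class_eqP; apply: ultra_congr2; apply: ultra_repK.
Qed.

Lemma scons_class (xs : nat -> S) (E : nat -> nat -> S) :
  scons (ultra_class xs : ultrapower_structure) (class_env E) =1 class_env (scons xs E).
Proof. by case. Qed.

Theorem los (f : formula) (E : nat -> nat -> S) :
  sat (class_env E) f <-> U (fun k => sat (E^~ k) f).
Proof.
elim: f E => [t s|t s|g IH|g IHg h IHh|g IH] E /=.
- by rewrite !los_term ultra_class_eqP.
- rewrite !los_term.
  have /= rep_div := ultra_congr2 (@s_div S) (ultra_repK (fun k => eval_term (E^~ k) t))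
    (ultra_repK (fun k => eval_term (E^~ k) s)).
  by split=> div; apply: filterS (filterI rep_div div) => k /= [->].
- by rewrite IH ultra_not.
- rewrite IHg IHh; split=> [[Ug Uh]|Ugh]; first exact: filterI.
  by split; apply: filterS Ugh => k [].
- split=> [[X]|Uex].
  + rewrite -[X]ultra_classK (sat_ext _ (scons_class _ _)) IH.
    by apply: filterS => k; rewrite (sat_ext _ (scons_coord _ _ k)); exists (ultra_rep X k).
  + have [k0 [x0 _]] : exists k x, sat (scons x (E^~ k)) g.
      apply: contrapT => none; apply: (filter_not_empty U).
      by apply: filterS Uex => k [x gx]; apply: none; exists k, x.
    pose P k x := (exists y, sat (scons y (E^~ k)) g) -> sat (scons x (E^~ k)) g.
    have [xs xsP] : {xs : nat -> S & forall k, P k (xs k)}.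
      apply: choice => k; rewrite /P.
      have [[x gx]|none] := pselect (exists x, sat (scons x (E^~ k)) g).
      + by exists x.
      + by exists x0 => /none.
    exists (ultra_class xs); rewrite (sat_ext _ (scons_class _ _)) IH.
    by apply: filterS Uex => k /xsP; rewrite (sat_ext _ (scons_coord _ _ k)).
Qed.

Lemma los_scons (xs : nat -> S) (E : nat -> nat -> S) (f : formula) :
  sat (scons (ultra_class xs : ultrapower_structure) (class_env E)) f <->
  U (fun k => sat (scons (xs k) (E^~ k)) f).
Proof.
rewrite (sat_ext _ (scons_class _ _)) los.
by split; apply: filterS => k; rewrite (sat_ext _ (scons_coord _ _ k)).
Qed.

Lemma ultrapower_elem_equiv : elem_equiv ultrapower_structure S.
Proof.
move=> f; split=> fS e.
- by apply: ultra_const; apply/(los f (fun n _ => e n)).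
- have class_e : e =1 class_env (ultra_rep \o e) by move=> n; rewrite /= ultra_classK.
  by rewrite (sat_ext _ class_e) los; apply: filterS filterT.
Qed.
End Ultrapower.

Lemma not_dp_small_of_eventual_pattern (S : structure) (phi : nat -> formula)
    (c : nat -> nat -> nat -> S) (psi : formula) (b : nat -> nat -> nat -> S) :
  (forall i0 j0, exists (x : nat -> S) (K : nat), forall k, (K <= k)%N -> forall i j,
     (sat (scons (x k) (fun n => c i n k)) (phi i) <-> i = i0) /\
     (sat (scons (x k) (fun n => b j n k)) psi <-> j = j0)) ->
  ~ dp_small S.
Proof.
move=> pattern; have [U [U_ultra U_cofinite]] := exists_nonprincipal_ultrafilter.
apply; first exact: ultrapower_elem_equiv.
exists phi, (fun i n => ultra_class U (c i n)), psi, (fun j n => ultra_class U (b j n)).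
move=> i0 j0 N; have [x [K xP]] := pattern i0 j0.
have eventually (P : nat -> Prop) : (forall k, (K <= k)%N -> P k) -> U P.
  by move=> KP; apply: filterS (U_cofinite K).
exists (ultra_class U x); split=> [||i _ ne|j _ ne]; rewrite los_scons ?ultra_not.
- by apply: eventually => k /xP/(_ i0 j0) [phiP _]; apply/phiP.
- by apply: eventually => k /xP/(_ i0 j0) [_ psiP]; apply/psiP.
- by apply: eventually => k /xP/(_ i j0) [->].
- by apply: eventually => k /xP/(_ i0 j) [_ ->].
Qed.

Local Open Scope ring_scope.

Section ValuationRing.

Variables (F : fieldType) (O : {pred F}).
Hypothesis O_valuation : is_valuation_ring O.

Lemma valring1 : 1 \in O.
Proof. by case: O_valuation. Qed.

Lemma valring0 : 0 \in O.
Proof. by case: O_valuation => O1 OB _ _; rewrite -(subrr 1) OB. Qed.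

Lemma valringM x y : x \in O -> y \in O -> x * y \in O.
Proof. by case: O_valuation => _ _ OM _; apply: OM. Qed.

Lemma valringX x n : x \in O -> x ^+ n \in O.
Proof.
by move=> xO; elim: n => [|n IHn]; rewrite ?expr0 ?valring1 // exprS valringM.
Qed.

Lemma valring_total x : x != 0 -> x \in O \/ x^-1 \in O.
Proof. by case: O_valuation => _ _ _; apply. Qed.

Lemma vunit1 : vunit O 1.
Proof. by split; rewrite ?oner_neq0 ?invr1 ?valring1. Qed.

Lemma vunitV x : vunit O x -> vunit O x^-1.
Proof. by case=> x0 xO xVO; split; rewrite ?invr_eq0 ?invrK. Qed.

Lemma vunit_root w n : vunit O (w ^+ n.+1) -> vunit O w.
Proof.
case=> wn0 wnO wnVO; have w0 : w != 0 by move: wn0; apply: contra => /eqP->; rewrite expr0n.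
have wVO_of_wO : w \in O -> w^-1 \in O.
  have -> : w^-1 = w ^+ n * (w ^+ n.+1)^-1.
    by rewrite exprSr invfM mulrA divff ?mul1r ?expf_neq0.
  by move=> wO; rewrite valringM ?valringX.
have wO_of_wVO : w^-1 \in O -> w \in O.
  have wE : w = w^-1 ^+ n * w ^+ n.+1 by rewrite exprSr mulrA -exprMn mulVf ?expr1n ?mul1r.
  by move=> wVO; rewrite wE valringM // valringX.
by have [wO|wVO] := valring_total w0; split=> //; [exact: wVO_of_wO|exact: wO_of_wVO].
Qed.

Lemma valring_invN_neq0 a : a^-1 \notin O -> a != 0.
Proof. by apply: contraNneq => ->; rewrite invr0 valring0. Qed.

Lemma vdiv_exp2l a m m' : a \in O -> a^-1 \notin O ->
  vdiv O (a ^+ m) (a ^+ m') <-> (m <= m')%N.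
Proof.
move=> aO aVNO; have a0 := valring_invN_neq0 aVNO.
split=> [[c cO amE]|le_mm']; last by exists (a ^+ (m' - m)); rewrite ?valringX // -exprD subnKC.
rewrite leqNgt; apply: contraNN aVNO => lt_m'm.
have [d md] : exists d, m = (m' + d.+1)%N by exists (m - m'.+1)%N; rewrite addnS -addSn subnKC.
have : a ^+ m' * 1 = a ^+ m' * (a ^+ d.+1 * c) by rewrite mulr1 {1}amE md exprD mulrA.
move/(mulfI (expf_neq0 m' a0)) => oneE.
by rewrite -[a^-1]mulr1 oneE exprS !mulrA mulVf // mul1r valringM ?valringX.
Qed.

Lemma vunit_div_vdiv x z : x != 0 -> z != 0 ->
  vunit O (x / z) <-> vdiv O x z /\ vdiv O z x.
Proof.
move=> x0 z0; split=> [[_ xzO xzVO]|[[c cO zE] [d dO xE]]].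
  split; first by exists (x / z)^-1; rewrite // invf_div mulrC mulfVK.
  by exists (x / z); rewrite // mulrC mulfVK.
have xzE : x / z = d by rewrite xE mulrC mulKf.
by split; rewrite ?mulf_neq0 ?invr_eq0 // ?invf_div ?xzE // zE mulrC mulKf.
Qed.

Definition vdivisible (N : nat) (x : F) : Prop := exists2 y, y != 0 & vunit O (x / y ^+ N).

Lemma vdivisible1 x : x != 0 -> vdivisible 1 x.
Proof. by move=> x0; exists x; rewrite // expr1 divff //; exact: vunit1. Qed.

Lemma vdivisible_unit N x : vunit O x -> vdivisible N x.
Proof. by exists 1; rewrite ?oner_neq0 // expr1n divr1. Qed.

Lemma vdivisibleV N x : vdivisible N x -> vdivisible N x^-1.
Proof.
by case=> y y0 /vunitV xyV; exists y^-1; rewrite ?invr_eq0 // exprVn invrK mulrC -invf_div.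
Qed.

Lemma vdivisible_exp N x t : x != 0 -> vdivisible N (x ^+ (N * t)).
Proof.
move=> x0; exists (x ^+ t); rewrite ?expf_neq0 // -exprM mulnC divff ?expf_neq0 //; exact: vunit1.
Qed.

Lemma vdivisible_dvdn M N x : (N %| M)%N -> vdivisible M x -> vdivisible N x.
Proof. by case/dvdnP=> k -> [y y0 xy]; exists (y ^+ k); rewrite ?expf_neq0 // -exprM. Qed.

Lemma vdivisible_root {n N} x : (0 < n)%N -> vdivisible (n * N) (x ^+ n) -> vdivisible N x.
Proof.
move=> n0 [y y0]; rewrite mulnC exprM -expr_div_n -(prednK n0).
by move/vunit_root; exists y.
Qed.

Lemma vdivisible_mulX {N x z} : z != 0 -> vdivisible N (x * z ^+ N) -> vdivisible N x.
Proof.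
move=> z0 [y y0 xzy]; exists (y / z); rewrite ?mulf_neq0 ?invr_eq0 //.
by rewrite expr_div_n invf_div mulrA.
Qed.

Lemma not_vdivisible_exp q i M a : (0 < q)%N -> a != 0 -> ~ vdivisible q a ->
  ~ vdivisible (q ^ i.+1) (a ^+ (q ^ i * (q * M + 1))).
Proof.
move=> q0 a0 aq div; apply: aq; have qi0 : (0 < q ^ i)%N by rewrite expn_gt0 q0.
apply: (vdivisible_mulX (expf_neq0 M a0)); apply: (vdivisible_root qi0).
have -> : (a * a ^+ M ^+ q) ^+ (q ^ i)%N = a ^+ (q ^ i * (q * M + 1))%N.
  by rewrite -exprM -exprS -exprM; congr (_ ^+ _); rewrite addn1 mulnC (mulnC M).
by rewrite -expnSr.
Qed.

Lemma exists_nonvdivisible_in_maximal_ideal N a : a != 0 -> ~ vdivisible N a ->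
  exists b, [/\ b \in O, b^-1 \notin O & ~ vdivisible N b].
Proof.
move=> a0 aN; have [aO|aNO] := boolP (a \in O).
  exists a; split=> //; apply/negP => aVO.
  by apply: aN; apply: vdivisible_unit.
have aVO : a^-1 \in O by case: (valring_total a0) => // aO; rewrite aO in aNO.
by exists a^-1; split; rewrite ?invrK // => /vdivisibleV; rewrite invrK.
Qed.

End ValuationRing.

(* The language has no constant 1, so [term_pow t 0] is a junk value. *)
Fixpoint term_pow (t : term) (n : nat) : term :=
  match n with 0 | 1 => t | S n' => TMul t (term_pow t n') end.

Section Formulas.

Variables (F : fieldType) (O : {pred F}).
Hypothesis O_valuation : is_valuation_ring O.
Local Notation sat := (@sat (vf_structure O)).

Lemma eval_term_pow (e : nat -> F) t n : (0 < n)%N ->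
  @eval_term (vf_structure O) e (term_pow t n) = @eval_term (vf_structure O) e t ^+ n.
Proof.
case: n => [//|n] _; elim: n => [|n IHn]; first by rewrite expr1.
by rewrite [LHS]/= -/(term_pow t n.+1) IHn -exprS.
Qed.

(* v(x) lies in n Gamma, for x the free variable 0. *)
Definition divisible_formula (n : nat) : formula :=
  FEx (FAnd (FDiv (TVar 1) (term_pow (TVar 0) n)) (FDiv (term_pow (TVar 0) n) (TVar 1))).

Lemma sat_divisible_formula x e n : x != 0 -> (0 < n)%N ->
  sat (scons x e) (divisible_formula n) <-> vdivisible O n x.
Proof.
move=> x0 n0; have ynE (y : F) :
    @eval_term (vf_structure O) (scons y (scons x e)) (term_pow (TVar 0) n) = y ^+ n.
  exact: eval_term_pow.
rewrite /=; split=> [[y]|[y y0 /vunit_div_vdiv xy]]; rewrite ?ynE.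
  move=> [x_yn yn_x]; have yn0 : y ^+ n != 0.
    by case: yn_x => c _ xE; apply: contraNneq x0 => yn0; rewrite xE yn0 mul0r.
  exists y; last exact/vunit_div_vdiv.
  by apply: contraNneq yn0 => ->; rewrite expr0n eqn0Ngt n0.
by exists y; rewrite ynE; apply: xy; rewrite ?expf_neq0.
Qed.

Definition level_formula (q i : nat) : formula :=
  FAnd (divisible_formula (q ^ i)) (FNot (divisible_formula (q ^ i.+1))).

Lemma sat_level_formula_exp q i i0 M a e : (1 < q)%N -> a != 0 -> ~ vdivisible O q a ->
  sat (scons (a ^+ (q ^ i0 * (q * M + 1))) e) (level_formula q i) <-> i = i0.
Proof.
move=> q1 a0 aq; have q0 := ltnW q1; set x := a ^+ _.
have satE j : sat (scons x e) (divisible_formula (q ^ j)) <-> vdivisible O (q ^ j) x.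
  by apply: sat_divisible_formula; rewrite ?expf_neq0 ?expn_gt0 ?q0.
have in_level := vdivisible_exp O_valuation (q ^ i0) (q * M + 1) a0.
have not_next := not_vdivisible_exp O_valuation (i := i0) (M := M) q0 a0 aq.
split=> [[/satE in_i not_next_i]|->]; last by split=> [|/satE /not_next]; first apply/satE.
case: (ltngtP i i0) => // [lt_ii0|lt_i0i].
- by case: not_next_i; apply/satE; apply: vdivisible_dvdn in_level; rewrite dvdn_exp2l.
- by case: not_next; apply: vdivisible_dvdn in_i; rewrite dvdn_exp2l.
Qed.

(* v(b_1) <= v(x) < v(b_2), for x, b_1, b_2 the variables 0, 1, 2. *)
Definition interval_formula : formula :=
  FAnd (FDiv (TVar 1) (TVar 0)) (FNot (FDiv (TVar 2) (TVar 0))).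

Lemma sat_interval_formula_exp a m j Q : a \in O -> a^-1 \notin O ->
  sat (scons (a ^+ m) (fun n => a ^+ ((j + n) * Q))) interval_formula <->
  (j * Q <= m < j.+1 * Q)%N.
Proof.
move=> aO aVNO /=; rewrite !vdiv_exp2l // addn0 addn1 ltnNge.
by split=> [[-> /negP ->]|/andP[-> /negP]].
Qed.

End Formulas.

Lemma mul_interval_index j j0 P Q : (P < Q)%N ->
  (j * Q <= j0 * Q + P < j.+1 * Q)%N = (j == j0).
Proof.
move=> lt_PQ; have Q0 : (0 < Q)%N by apply: leq_ltn_trans lt_PQ.
have below_next : (j0 * Q + P < j0.+1 * Q)%N by rewrite mulSn addnC ltn_add2r.
apply/idP/eqP => [/andP[lo hi]|->]; last by rewrite leq_addr.
apply/eqP; rewrite eqn_leq; apply/andP; split; rewrite -ltnS -(ltn_pmul2r Q0).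
- exact: leq_ltn_trans lo below_next.
- exact: leq_ltn_trans (leq_addr P _) hi.
Qed.

Lemma not_dp_small_of_not_vdivisible (F : fieldType) (O : {pred F}) a q :
  is_valuation_ring O -> a \in O -> a^-1 \notin O -> (1 < q)%N -> ~ vdivisible O q a ->
  ~ dp_small (vf_structure O).
Proof.
move=> O_valuation aO aVNO q1 aq; have a0 := valring_invN_neq0 O_valuation aVNO.
apply: (@not_dp_small_of_eventual_pattern (vf_structure O) (level_formula q)
  (fun _ _ _ => 0) interval_formula (fun j n k => a ^+ ((j + n) * q ^ k)%N)).
move=> i0 j0; exists (fun k => a ^+ (j0 * q ^ k + q ^ i0)), i0.+1 => k lt_i0k i j; split.
- have -> : (j0 * q ^ k + q ^ i0 = q ^ i0 * (q * (j0 * q ^ (k - i0.+1)) + 1))%N.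
    rewrite -[in LHS](subnKC lt_i0k) expnS expnD; ring.
  exact: sat_level_formula_exp.
- rewrite sat_interval_formula_exp // mul_interval_index ?ltn_exp2l //.
  by split=> [/eqP|->].
Qed.

Theorem theorem1p6 (F : fieldType) (O : {pred F}) :
  is_valuation_ring O -> henselian O -> dp_small (vf_structure O) ->
  value_group_divisible O.
Proof.
move=> O_valuation _ dps a a0 n n0; apply: contrapT => not_div.
have a_n : ~ vdivisible O n a by case=> b b0 ab; apply: not_div; exists b.
have [b [bO bVNO b_n]] := exists_nonvdivisible_in_maximal_ideal O_valuation a0 a_n.
have n1 : (1 < n)%N.
  by case: n n0 a_n {not_div b_n} => [|[|n]] // _ /(_ (vdivisible1 O_valuation a0)).
exact: not_dp_small_of_not_vdivisible O_valuation bO bVNO n1 b_n dps.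
Qed.
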